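(* Consider the single unicast index coding problem $\mathbb I$ with six messages $W_1,\dots,W_6$ and six receivers, where receiver $j$ demands only $W_j$ and has side information $S(j)={\cal W}\setminus(\{W_j\}\cup I_j)$, with $I_1=\{W_4\}$, $I_2=\{W_1,W_3\}$, $I_3=\{W_1\}$, $I_4=\emptyset$, $I_5=\{W_1,W_3,W_4\}$, $I_6=\{W_1,W_2,W_4\}$ (so $Interf_j(j)=I_j$). Then (a) $\mathbb I$ has no acyclic subset of messages of size $4$, and (b) $\mathbb I$ admits no valid scalar linear index code of length $3$ over any finite field.
   Context: Index coding setup: An index coding problem $\mathbb I$ over a finite field $\mathbb F$ consists of a set of messages ${\cal W}=\{W_1,\dots,W_n\}$ (each message is a symbol of $\mathbb F$ in the scalar setting), a set of receivers $[1:T]$, and for each receiver $j$ a demand set $D(j)\subseteq{\cal W}$ and a side-information set $S(j)\subseteq {\cal W}\setminus D(j)$. For a receiver $j$ and $W_k\in D(j)$, the interfering set is $Interf_k(j)={\cal W}\setminus(\{W_k\}\cup S(j))$. A scalar linear index code of length $L$ over $\mathbb F$ is an assignment of vectors $V_1,\dots,V_n\in\mathbb F^L$ to the messages; the source broadcasts $\sum_{i=1}^n V_iW_i\in\mathbb F^L$, and the code is valid if every receiver $j$ can recover every message of $D(j)$ from the broadcast codeword and the messages in $S(j)$. An acyclic subset of messages of size $4$ is a set of four distinct messages $W_{i_1},W_{i_2},W_{i_3},W_{i_4}$ such that for each $k\in\{1,2,3,4\}$ there is a receiver $j_k$ demanding $W_{i_k}$ with $\{W_{i_{k'}}:k'<k\}\subseteq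 Interf_{i_k}(j_k)$. *)

From HB Require Import structures.
From mathcomp Require Import all_boot all_order all_algebra.
Set Implicit Arguments. Unset Strict Implicit. Unset Printing Implicit Defensive.
Import GRing.Theory.
Local Open Scope ring_scope.

Record icp (n T : nat) := ICP {
  demand : 'I_T -> {set 'I_n};
  side   : 'I_T -> {set 'I_n}
}.

Definition icp_wf n T (P : icp n T) : Prop :=
  forall j, [disjoint demand P j & side P j].

Definition interf n T (P : icp n T) (k : 'I_n) (j : 'I_T) : {set 'I_n} :=
  ~: (k |: side P j).

Definition has_acyclic4 n T (P : icp n T) : Prop :=
  exists i : 'I_4 -> 'I_n, injective i /\
    forall k : 'I_4, exists j : 'I_T,
      i k \in demand P j /\
      [set i k' | k' : 'I_4 & (k' < k)%N] \subset interf P (i k) j.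

Definition codeword (F : fieldType) n L (V : 'I_n -> 'rV[F]_L) (w : 'I_n -> F)
  : 'rV[F]_L := \sum_i w i *: V i.

(* the messages known to a receiver with side information S (other
   coordinates masked to 0, so a decoder only sees W_i for i in S) *)
Definition restrict (F : fieldType) n (S : {set 'I_n}) (w : 'I_n -> F) : 'I_n -> F :=
  fun i => if i \in S then w i else 0.

Definition valid_scalar_linear_code (F : fieldType) n T L (P : icp n T)
  (V : 'I_n -> 'rV[F]_L) : Prop :=
  forall (j : 'I_T) (k : 'I_n), k \in demand P j ->
    exists dec : 'rV[F]_L -> ('I_n -> F) -> F,
      forall w : 'I_n -> F, dec (codeword V w) (restrict (side P j) w) = w k.

(* The specific problem: receiver j demands W_j, S(j) = W \ ({W_j} u I_j).
   0-based indices: message W_m is index m-1. *)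
Definition I6 (j : 'I_6) : {set 'I_6} :=
  match val j with
  | 0 => [set inord 3]
  | 1 => [set inord 0; inord 2]
  | 2 => [set inord 0]
  | 3 => set0
  | 4 => [set inord 0; inord 2; inord 3]
  | _ => [set inord 0; inord 1; inord 3]
  end.

Definition P6 : icp 6 6 :=
  ICP (fun j => [set j]) (fun j => ~: (j |: I6 j)).

(** The decodability of a scalar linear code says exactly that the vector of
    each demanded message lies outside the span of the vectors of its
    interfering messages.  For the problem at hand this gives six
    non-membership conditions on vectors [v0, ..., v5] of [F^3].  Since
    [v3 != 0] and [v0] is not on the line [<v3>], [U = <v0, v3>] is a plane;
    [v4] (resp. [v5]) escaping [<v0, v2, v3>] (resp. [<v0, v1, v3>]) forces
    these spaces to be the plane [U], so [v1, v2] lie in [U].  But then the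
    plane [<v0, v2>] is [U] too, and contains [v1], a contradiction.
    The absence of an acyclic 4-set is a finite check: its last two messages
    [c], [d] would satisfy [c \in I_d] with [I_c :&: I_d] holding two
    distinct messages, which never happens. *)

From HB Require Import structures.
From mathcomp Require Import all_boot all_order all_algebra.
From Stdlib Require Import FunctionalExtensionality.
Set Implicit Arguments. Unset Strict Implicit. Unset Printing Implicit Defensive.
Import GRing.Theory.
Local Open Scope ring_scope.

Section Decoding.
Variables (F : fieldType) (n L : nat) (V : 'I_n -> 'rV[F]_L).

Definition rows_on (X : {set 'I_n}) : 'M[F]_(n, L) :=
  \matrix_i (if i \in X then V i else 0).

Lemma sub_rows_on (X : {set 'I_n}) i : i \in X -> (V i <= rows_on X)%MS.
Proof.
move=> iX; have <- : row i (rows_on X) = V i by rewrite rowK iX.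
exact: row_sub.
Qed.

Lemma codeword0 : codeword V (fun=> 0) = 0.
Proof. by rewrite /codeword big1 // => i _; rewrite scale0r. Qed.

Lemma decodable_ker (S : {set 'I_n}) (k : 'I_n) dec :
    (forall w, dec (codeword V w) (restrict S w) = w k) ->
  forall w, codeword V w = 0 -> {in S, forall i, w i = 0} -> w k = 0.
Proof.
move=> decP w cw0 wS0.
have restrict0 : restrict S w = restrict S (fun=> 0).
  by apply: functional_extensionality => i; rewrite /restrict; case: ifP => // /wS0.
by rewrite -decP cw0 restrict0 -codeword0 decP.
Qed.

Lemma valid_code_not_sub T (P : icp n T) j k :
    valid_scalar_linear_code P V -> k \in demand P j -> k \notin side P j ->
  ~~ (V k <= rows_on (interf P k j))%MS.
Proof.
move=> valid kD kS; have [dec decP] := valid j k kD.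
apply/submxP => -[u Vk].
pose w i := (i == k)%:R - (if i \in interf P k j then u 0 i else 0).
suff : w k = 0 by rewrite /w !inE eqxx /= subr0 => /eqP; rewrite oner_eq0.
apply: (decodable_ker decP).
- rewrite /codeword; under eq_bigr do rewrite scalerBl.
  rewrite sumrB (bigD1 k) //= eqxx scale1r big1 => [|i /negbTE->]; last by rewrite scale0r.
  rewrite addr0 Vk mulmx_sum_row; apply/eqP; rewrite subr_eq0; apply/eqP/eq_bigr => i _.
  by rewrite rowK; case: ifP; rewrite ?scale0r ?scaler0.
- move=> i iS; have ik : i != k by apply: contraNneq kS => <-.
  by rewrite /w (negbTE ik) !inE iS (negbTE ik) /= subrr.
Qed.

End Decoding.

Definition unicast_icp n (I : 'I_n -> {set 'I_n}) : icp n n :=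
  ICP (fun j => [set j]) (fun j => ~: (j |: I j)).

Section Unicast.
Variables (n : nat) (I : 'I_n -> {set 'I_n}).
Hypothesis I_irrefl : forall k, k \notin I k.

Lemma interf_unicast k : interf (unicast_icp I) k k = I k.
Proof.
apply/setP => i; rewrite !inE negb_or negbK.
by case: eqVneq => [->|] /=; rewrite ?(negbTE (I_irrefl k)).
Qed.

Lemma unicast_valid_not_sub (F : fieldType) L (V : 'I_n -> 'rV[F]_L) k :
  valid_scalar_linear_code (unicast_icp I) V -> ~~ (V k <= rows_on V (I k))%MS.
Proof.
move=> valid; rewrite -interf_unicast.
by apply: valid_code_not_sub; rewrite //= !inE eqxx.
Qed.

Lemma unicast_acyclic4_chain : has_acyclic4 (unicast_icp I) ->
  exists c d a b : 'I_n, [/\ c \in I d, a != b & {subset [:: a; b] <= I c :&: I d}].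
Proof.
case=> i [i_inj acyclic].
have before (k k' : 'I_4) : (k' < k)%N -> i k' \in I (i k).
  move=> lt_k'k; have [j []] := acyclic k; rewrite inE => /eqP ->.
  rewrite interf_unicast => /subsetP; apply; apply/imsetP; exists k' => //.
  by rewrite inE.
exists (i 2), (i 3), (i 0), (i 1); split; first exact: before.
  by rewrite (inj_eq i_inj).
by move=> x; rewrite !inE => /orP[] /eqP->; rewrite !before.
Qed.

End Unicast.

Section RankArguments.
Variable F : fieldType.

Lemma rank_adds_rV n (u v : 'rV[F]_n) :
  u != 0 -> ~~ (v <= u)%MS -> \rank (u + v)%MS = 2.
Proof.
move=> u0 vNu; have lt_u : (\rank u < \rank (u + v))%N.
  by apply: rank_ltmx; rewrite ltmxE addsmxSl addsmx_sub submx_refl.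
have le2 := mxrank_adds_leqif u v; move: lt_u le2.1.
by rewrite !rank_rV u0; case: (v != 0) => /=; case: (\rank _) => [|[|[|]]].
Qed.

Lemma hyperplane_sub_maximal m1 m2 n (A : 'M[F]_(m1, n)) (B : 'M_(m2, n)) (v : 'rV_n) :
  (A <= B)%MS -> (\rank A).+1 = n -> ~~ (v <= B)%MS -> (B <= A)%MS.
Proof.
move=> sAB rkA vNB; have rkB : (\rank B < n)%N.
  by rewrite ltnNge col_leq_rank; apply: contra vNB => /submx_full->.
have [_ <-] := mxrank_leqif_sup sAB.
by rewrite eqn_leq mxrankS // -ltnS rkA.
Qed.

Lemma no_rV3_configuration (v0 v1 v2 v3 v4 v5 : 'rV[F]_3) :
  ~~ (v0 <= v3)%MS -> ~~ (v1 <= v0 + v2)%MS -> ~~ (v2 <= v0)%MS -> v3 != 0 ->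
  ~~ (v4 <= v0 + v2 + v3)%MS -> ~~ (v5 <= v0 + v1 + v3)%MS -> False.
Proof.
move=> v0Nv3 v1Nv02 v2Nv0 v3_0 v4Nv023 v5Nv013.
have v0_0 : v0 != 0 by apply: contraNneq v0Nv3 => ->; rewrite sub0mx.
have rk30 := rank_adds_rV v3_0 v0Nv3.
have rk02 := rank_adds_rV v0_0 v2Nv0.
have s30_023 : (v3 + v0 <= v0 + v2 + v3)%MS.
  by rewrite addsmx_sub addsmxSr -addsmxA addsmxSl.
have s30_013 : (v3 + v0 <= v0 + v1 + v3)%MS.
  by rewrite addsmx_sub addsmxSr -addsmxA addsmxSl.
have v2_30 : (v2 <= v3 + v0)%MS.
  apply: submx_trans (hyperplane_sub_maximal s30_023 _ v4Nv023); last by rewrite rk30.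
  by rewrite -addsmxA (submx_trans (addsmxSl v2 v3)) ?addsmxSr.
have v1_30 : (v1 <= v3 + v0)%MS.
  apply: submx_trans (hyperplane_sub_maximal s30_013 _ v5Nv013); last by rewrite rk30.
  by rewrite -addsmxA (submx_trans (addsmxSl v1 v3)) ?addsmxSr.
have s02_30 : (v0 + v2 <= v3 + v0)%MS by rewrite addsmx_sub addsmxSr.
have v4N30 : ~~ (v4 <= v3 + v0)%MS by apply: contra v4Nv023 => /submx_trans->.
move: v1Nv02; rewrite (submx_trans v1_30) //.
by apply: hyperplane_sub_maximal s02_30 _ v4N30; rewrite rk02.
Qed.

End RankArguments.

Local Close Scope ring_scope.

(* Set literals over ['I_6] do not reduce by computation, so the finite
   checks on [I6] go through this table of the values of its elements. *)
Definition I6_table (j : nat) : seq nat :=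
  nth [::] [:: [:: 3]; [:: 0; 2]; [:: 0]; [::]; [:: 0; 2; 3]; [:: 0; 1; 3]] j.

Lemma mem_I6 (j x : 'I_6) : (x \in I6 j) = ((x : nat) \in I6_table j).
Proof.
by case: j => -[|[|[|[|[|[|//]]]]]] ?; rewrite /I6 /= !inE -?val_eqE /= ?inordK ?orbA.
Qed.

Lemma I6_irrefl k : k \notin I6 k.
Proof. by rewrite mem_I6; case: k => -[|[|[|[|[|[|]]]]]]. Qed.

Lemma I6_table_chain_free : all (fun d => all (fun c => all (fun a => all (fun b =>
    (a == b) || (a \notin I6_table d) || (b \notin I6_table d))
  (I6_table c)) (I6_table c)) (I6_table d)) (iota 0 6).
Proof. by []. Qed.

Lemma P6_unicast : P6 = unicast_icp I6.
Proof. by []. Qed.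

Lemma P6_no_acyclic4 : ~ has_acyclic4 P6.
Proof.
rewrite P6_unicast => /(unicast_acyclic4_chain I6_irrefl) [c [d [a [b [cd ab abI]]]]].
have /andP[ac ad] : (a \in I6 c) && (a \in I6 d) by rewrite -in_setI abI ?inE ?eqxx.
have /andP[bc bd] : (b \in I6 c) && (b \in I6 d) by rewrite -in_setI abI ?inE ?eqxx ?orbT.
rewrite !mem_I6 in cd ac ad bc bd.
move/allP/(_ d): I6_table_chain_free; rewrite mem_iota ltn_ord => /(_ isT).
move=> /allP/(_ c cd)/allP/(_ a ac)/allP/(_ b bc).
by rewrite ad bd !orbF (inj_eq val_inj) (negbTE ab).
Qed.

Lemma P6_no_linear_code_rV3 (F : fieldType) (V : 'I_6 -> 'rV[F]_3) :
  ~ valid_scalar_linear_code P6 V.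
Proof.
rewrite P6_unicast => valid.
have notsub k A : (A <= rows_on V (I6 k))%MS -> ~~ (V k <= A)%MS.
  by move=> sA; apply: contra (unicast_valid_not_sub I6_irrefl k valid) => /submx_trans->.
have inI6 k x : x < 6 -> k < 6 -> x \in I6_table k ->
    (V (inord x) <= rows_on V (I6 (inord k)))%MS.
  by move=> ltx ltk xk; apply: sub_rows_on; rewrite mem_I6 !inordK.
apply: (@no_rV3_configuration F (V (inord 0)) (V (inord 1)) (V (inord 2))
  (V (inord 3)) (V (inord 4)) (V (inord 5))).
- by apply: notsub; apply: inI6.
- by apply: notsub; rewrite addsmx_sub !inI6.
- by apply: notsub; apply: inI6.
- by rewrite -submx0; apply: notsub; rewrite sub0mx.
- by apply: notsub; rewrite !addsmx_sub !inI6.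
- by apply: notsub; rewrite !addsmx_sub !inI6.
Qed.

Theorem mainTheorem10 :
  ~ has_acyclic4 P6 /\
  (forall (F : finFieldType) (V : 'I_6 -> 'rV[F]_3),
      ~ valid_scalar_linear_code P6 V).
Proof. by split; [exact: P6_no_acyclic4 | move=> F V; exact: P6_no_linear_code_rV3]. Qed.
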